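(* Let $R$ be a commutative ring with identity and $a\in R$. Then $a\Gamma_a(R)[x]=a\Gamma_a(R[x])$, where $a\Gamma_a(R)[x]$ denotes the set of polynomials in $R[x]$ all of whose coefficients lie in $a\Gamma_a(R)$, and $a\Gamma_a(R[x])$ is computed with $R[x]$ viewed as a module over itself (equivalently, over $R$).
   Context: For a ring (or module) $S$ containing $a$ acting by multiplication: $\Gamma_{a}(S)=\{s\in S \mid a^{k}s=0 \text{ for some } k\in\mathbb{Z}^{+}\}$ and $a\Gamma_{a}(S)=\{as \mid s\in \Gamma_a(S)\}$. *)

From mathcomp Require Import all_boot all_algebra.
Set Implicit Arguments. Unset Strict Implicit. Unset Printing Implicit Defensive.
Import GRing.Theory.
Local Open Scope ring_scope.

Definition Gamma (S : comNzRingType) (a : S) (s : S) : Prop :=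
  exists k : nat, (0 < k)%N /\ a ^+ k * s = 0.

Definition aGamma (S : comNzRingType) (a : S) (s : S) : Prop :=
  exists t : S, Gamma a t /\ s = a * t.

From mathcomp Require Import all_boot all_algebra.
Import GRing.Theory.
Local Open Scope ring_scope.

(* a Gamma_a(S) is an ideal of S, preserved by ring morphisms, and the
   coefficients of an element of a Gamma_a(R[x]) lie in a Gamma_a(R) because
   multiplication by the constant a^k acts coefficientwise.  Conversely a
   polynomial is the sum of its monomials p_i x^i, each of which lies in the
   ideal a Gamma_a(R[x]) once p_i does. *)

Section GammaIdeal.

Context {S : comNzRingType} {a : S}.

Lemma Gamma0 : Gamma a 0.
Proof. by exists 1%N; rewrite mulr0. Qed.

Lemma GammaD x y : Gamma a x -> Gamma a y -> Gamma a (x + y).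
Proof.
move=> [k [k_gt0 akx]] [l [_ aly]]; exists (k + l)%N.
split; first by rewrite addn_gt0 k_gt0.
by rewrite exprD mulrDr -!mulrA aly mulrCA akx !mulr0 addr0.
Qed.

Lemma GammaMr x y : Gamma a x -> Gamma a (x * y).
Proof. by move=> [k [k_gt0 akx]]; exists k; rewrite mulrA akx mul0r. Qed.

Lemma aGamma0 : aGamma a 0.
Proof. by exists 0; rewrite mulr0; split; first exact: Gamma0. Qed.

Lemma aGammaD x y : aGamma a x -> aGamma a y -> aGamma a (x + y).
Proof.
move=> [t [Gt ->]] [u [Gu ->]].
by exists (t + u); rewrite mulrDr; split; first exact: GammaD.
Qed.

Lemma aGammaMr x y : aGamma a x -> aGamma a (x * y).
Proof.
by move=> [t [Gt ->]]; exists (t * y); rewrite mulrA; split; first exact: GammaMr.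
Qed.

End GammaIdeal.

Lemma Gamma_rmorph {S T : comNzRingType} (f : {rmorphism S -> T}) a s :
  Gamma a s -> Gamma (f a) (f s).
Proof. by move=> [k [k_gt0 aks]]; exists k; rewrite -rmorphXn -rmorphM aks rmorph0. Qed.

Lemma aGamma_rmorph {S T : comNzRingType} (f : {rmorphism S -> T}) a s :
  aGamma a s -> aGamma (f a) (f s).
Proof.
by move=> [t [Gt ->]]; exists (f t); rewrite rmorphM; split; first exact: Gamma_rmorph.
Qed.

Lemma Gamma_coef {R : comNzRingType} {a : R} {q : {poly R}} i :
  Gamma a%:P q -> Gamma a q`_i.
Proof.
by move=> [k [k_gt0 akq]]; exists k; rewrite -coefCM polyC_exp akq coef0.
Qed.

Lemma aGamma_coef {R : comNzRingType} {a : R} {p : {poly R}} i :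
  aGamma a%:P p -> aGamma a p`_i.
Proof.
by move=> [q [Gq ->]]; exists q`_i; rewrite coefCM; split; first exact: Gamma_coef.
Qed.

Theorem mainTheorem8 (R : comNzRingType) (a : R) (p : {poly R}) :
  (forall i : nat, aGamma a p`_i) <-> aGamma (a%:P) p.
Proof.
split=> [coef_aGamma | aGp i]; last exact: aGamma_coef.
rewrite -[p]coefK poly_def.
apply: (big_ind (aGamma a%:P)) => [||i _]; [exact: aGamma0 | exact: aGammaD |].
by rewrite -mul_polyC; apply/aGammaMr/(aGamma_rmorph polyC)/coef_aGamma.
Qed.
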